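(* Suppose $(n,w)$ is an instance of TSP with $w:E_n\to[-1,1]$ and $w[K_n]=d\binom n2$ for some $d\in[0,1]$, and let $H$ be a directed Hamilton cycle of $K_n$ whose vertices in order are $v_0,v_1,\dots,v_{n-1}$. Writing $w_H^+(v_i):=\sum_{i+1\le j\le n-1}|w(v_iv_j)|$, we have $$\sum_{i=1}^{n-2}\frac{w_H^+(v_{i-1})}{n-i}\le \sqrt d\,n+2.$$
   Context: $K_n=(V_n,E_n)$ is the complete graph on $n$ vertices and $w[K_n]=\sum_{e\in E_n}|w(e)|$. *)

From HB Require Import structures.
From mathcomp Require Import all_boot all_order all_algebra.
Set Implicit Arguments. Unset Strict Implicit. Unset Printing Implicit Defensive.
Import Order.TTheory GRing.Theory Num.Theory.
Local Open Scope ring_scope.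

(* Vertices of K_n are 'I_n; an edge weighting of K_n is a symmetric
   function w : 'I_n -> 'I_n -> R (only values w i j with i <> j matter). *)
Definition sym_weight (R : rcfType) n (w : 'I_n -> 'I_n -> R) : Prop :=
  forall i j, w i j = w j i.

Definition wK (R : rcfType) n (w : 'I_n -> 'I_n -> R) : R :=
  \sum_(i < n) \sum_(j < n | (i < j)%N) `|w i j|.

(* For a Hamilton cycle given by the vertex order v_0, ..., v_{n-1}
   (v : 'I_n -> 'I_n a bijection),
   w_H^+(v_i) = sum_{i+1 <= j <= n-1} |w(v_i v_j)|. *)
Definition wHplus (R : rcfType) n (w : 'I_n -> 'I_n -> R) (v : 'I_n -> 'I_n)
  (i : 'I_n) : R :=
  \sum_(j < n | (i < j)%N) `|w (v i) (v j)|.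

Definition prev_ord n (i : 'I_n) : 'I_n :=
  Ordinal (leq_ltn_trans (leq_pred i) (ltn_ord i)).

From HB Require Import structures.
From mathcomp Require Import all_boot all_order all_algebra.
From mathcomp Require Import lra zify.
Set Implicit Arguments. Unset Strict Implicit. Unset Printing Implicit Defensive.
Import Order.TTheory GRing.Theory Num.Theory.
Local Open Scope ring_scope.

(* Proof of Proposition 4.4.  Write n = N + 2, h_k = w_H^+(v_k) and
   x_k = h_k / (n - 1 - k) for k < N, so that the sum to be bounded is
   S = x_0 + ... + x_{N-1}.
   - Every vertex v_k has only n - 1 - k successors on H and |w| <= 1, hence
     0 <= x_k <= 1.
   - Summing w_H^+ over all vertices counts every edge once, so
     sum_k h_k = w[K_n] = d C(n,2).
   - An elementary inequality for numbers in [0,1] (proved by induction on N)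
     gives S^2 + S <= 2 sum_k (N - k) x_k <= 2 sum_k h_k = d n (n - 1).
   Hence S^2 <= d n^2, i.e. S <= sqrt(d) n, which is even stronger than the
   claimed bound sqrt(d) n + 2.  The file first proves the counting facts
   about w_H^+, then the inequality on [0,1]-sequences, then a reindexing of
   the sum in the statement, and finally assembles the theorem. *)

Lemma bin2_double (n : nat) : ('C(n, 2) * 2 = n * n.-1)%N.
Proof. by have := bin_ffact n 2; rewrite ffactnS ffactn1. Qed.

Lemma sum_distinct_pairs (R : nmodType) n (g : 'I_n -> 'I_n -> R)
  (gsym : forall i j, g i j = g j i) :
  \sum_(i < n) \sum_(j < n | i != j) g i j
  = (\sum_(i < n) \sum_(j < n | (i < j)%N) g i j) *+ 2.
Proof.
have split_ne (i j : 'I_n) : (if i != j then g i j else 0)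
    = (if (i < j)%N then g i j else 0) + (if (j < i)%N then g j i else 0).
  rewrite -(inj_eq val_inj) /=.
  by case: (ltngtP i j) => _; rewrite ?addr0 ?add0r // gsym.
under eq_bigr => i _ do rewrite big_mkcond /=.
under eq_bigr => i _ do under eq_bigr => j _ do rewrite split_ne.
under eq_bigr => i _ do rewrite big_split /=.
rewrite big_split /= [X in _ + X]exchange_big /= mulr2n.
by congr (_ + _); apply: eq_bigr => i _; rewrite [RHS]big_mkcond.
Qed.

Lemma sum_wHplus (R : rcfType) n (w : 'I_n -> 'I_n -> R) (v : 'I_n -> 'I_n)
  (hsym : sym_weight w) (hv : bijective v) :
  \sum_(i < n) wHplus w v i = wK w.
Proof.
have vinj := bij_inj hv.
apply/eqP; rewrite -(eqr_pMn2r (_ : 0 < 2)%N) //; apply/eqP.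
rewrite /wK /wHplus.
rewrite -(@sum_distinct_pairs _ _ (fun i j => `|w (v i) (v j)|)); last first.
  by move=> i j; rewrite hsym.
rewrite -(@sum_distinct_pairs _ _ (fun i j => `|w i j|)); last first.
  by move=> i j; rewrite hsym.
rewrite [RHS](reindex_inj vinj); apply: eq_bigr => i _.
by rewrite [RHS](reindex_inj vinj); apply: eq_bigl => j; rewrite (inj_eq vinj).
Qed.

Lemma wHplus_ge0 (R : rcfType) n (w : 'I_n -> 'I_n -> R) (v : 'I_n -> 'I_n)
  (i : 'I_n) : 0 <= wHplus w v i.
Proof. exact: sumr_ge0. Qed.

(* The vertex v_i has n - 1 - i successors on H, each contributing at most 1,
   so 0 <= w_H^+(v_i) / (n - 1 - i) <= 1 whenever v_i is not the last vertex. *)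
Lemma wHplus_scaled_bounds (R : rcfType) n (w : 'I_n -> 'I_n -> R)
  (v : 'I_n -> 'I_n) (hw : forall i j : 'I_n, i != j -> -1 <= w i j <= 1)
  (vinj : injective v) (i : 'I_n) : (i.+1 < n)%N ->
  0 <= wHplus w v i / (n - i.+1)%:R <= 1.
Proof.
move=> lt_in; have den_gt0 : 0 < (n - i.+1)%:R :> R by rewrite ltr0n; lia.
rewrite divr_ge0 ?wHplus_ge0 ?ler0n //= ler_pdivrMr // mul1r.
apply: le_trans (_ : \sum_(j < n | (i < j)%N) (1 : R) <= _).
  apply: ler_sum => j lt_ij; have : v i != v j.
    by rewrite (inj_eq vinj) -(inj_eq val_inj) /= neq_ltn lt_ij.
  by move/hw; rewrite ler_norml.
have -> : \sum_(j < n | (i < j)%N) (1 : R) = \sum_(i.+1 <= j < n) 1.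
  by rewrite big_geq_mkord.
by rewrite sumr_const_nat.
Qed.

(* Vertex v_k (k < N) has N + 1 - k >= N - k successors, so weighting the
   ratio w_H^+(v_k) / (N + 1 - k) by N - k gives at most w_H^+(v_k); summing
   and using sum_wHplus bounds the weighted sum of the ratios by w[K_n]. *)
Lemma weighted_ratios_le_wK (R : rcfType) N (w : 'I_N.+2 -> 'I_N.+2 -> R)
  (v : 'I_N.+2 -> 'I_N.+2) (hsym : sym_weight w) (hv : bijective v) :
  \sum_(k < N) (N - k)%:R * (wHplus w v (inord k) / (N.+2 - k.+1)%:R) <= wK w.
Proof.
rewrite -(sum_wHplus hsym hv).
apply: le_trans (_ : \sum_(k < N) wHplus w v (inord k) <= _).
  apply: ler_sum => k _; have lt_kN := ltn_ord k.
  have den_gt0 : 0 < (N.+2 - k.+1)%:R :> R by rewrite ltr0n; lia.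
  rewrite mulrA ler_pdivrMr // mulrC ler_wpM2l ?wHplus_ge0 // ler_nat.
  lia.
rewrite (big_ord_widen N.+2 (fun k => wHplus w v (inord k))) ?leqW //.
rewrite big_mkcond /=; apply: ler_sum => i _.
by rewrite inord_val; case: ifP => // _; apply: wHplus_ge0.
Qed.

(* Peeling off x_0 reduces it to the
   inequality for x_1, ..., x_{N-1}, using that their sum is at most N. *)
Lemma sqr_add_le_weighted_sum (R : realFieldType) (N : nat) (x : nat -> R) :
  (forall k, (k < N)%N -> 0 <= x k <= 1) ->
  (\sum_(k < N) x k) ^+ 2 + \sum_(k < N) x k
    <= 2 * \sum_(k < N) (N - k)%:R * x k.
Proof.
elim: N x => [|N IH] x x01; first by rewrite !big_ord0 expr2 !mulr0 addr0.
rewrite !big_ord_recl /= subn0.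
under [X in 2 * (_ + X)]eq_bigr => i _ do rewrite /bump /= add1n subSS.
have tail01 k : (k < N)%N -> 0 <= x k.+1 <= 1 by move=> ?; apply: x01.
have := IH _ tail01.
set S := \sum_(i < N) x _; set T := \sum_(i < N) _ => IHx.
have S_ge0 : 0 <= S by apply: sumr_ge0 => i _; case/andP: (tail01 i (ltn_ord i)).
have S_leN : S <= N%:R.
  rewrite -[N in N%:R]card_ord -sumr_const.
  by apply: ler_sum => i _; case/andP: (tail01 i (ltn_ord i)).
have /andP[x0_ge0 x0_le1] := x01 0%N isT.
rewrite -addn1 natrD; nra.
Qed.

Lemma le_sqrt_mul (R : rcfType) (s d m : R) :
  0 <= s -> 0 <= d -> 0 <= m -> s ^+ 2 <= d * m ^+ 2 -> s <= Num.sqrt d * m.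
Proof.
move=> s_ge0 d_ge0 m_ge0 sq_le.
by rewrite -ler_sqr ?nnegrE ?mulr_ge0 ?sqrtr_ge0 // exprMn sqr_sqrtr.
Qed.

Lemma sum_prev_reindex (R : nmodType) N (G : 'I_N.+2 -> nat -> R) :
  \sum_(i < N.+2 | (1 <= i)%N && (i <= N.+2 - 2)%N) G (prev_ord i) i
  = \sum_(k < N) G (inord k) k.+1.
Proof.
rewrite big_mkcond big_ord_recl big_ord_recr /= !subSS subn0 /bump /= add1n.
rewrite ltnn add0r addr0; apply: eq_bigr => k _; rewrite add1n ltn_ord; congr G.
by apply: val_inj; rewrite /= add0n inordK // !leqW.
Qed.

Theorem proposition4p4 (R : rcfType) (n : nat) (hn : (2 < n)%N)
  (w : 'I_n -> 'I_n -> R) (hsym : sym_weight w)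
  (hw : forall i j : 'I_n, i != j -> -1 <= w i j <= 1)
  (d : R) (hd : 0 <= d <= 1) (hwK : wK w = d * ('C(n, 2))%:R)
  (v : 'I_n -> 'I_n) (hv : bijective v) :
  \sum_(i < n | (1 <= i)%N && (i <= n - 2)%N)
     wHplus w v (prev_ord i) / (n - i)%:R
  <= Num.sqrt d * n%:R + 2.
Proof.
case: n hn w hsym hw hwK v hv => [|[|N]] // _ w hsym hw hwK v hv.
pose x k := wHplus w v (inord k) / (N.+2 - k.+1)%:R.
rewrite (@sum_prev_reindex _ _ (fun a i => wHplus w v a / (N.+2 - i)%:R)) -/x.
have x01 k : (k < N)%N -> 0 <= x k <= 1.
  move=> lt_kN; have := wHplus_scaled_bounds hw (bij_inj hv) (i := inord k).
  by rewrite inordK; [apply; lia | lia].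
have weighted : \sum_(k < N) (N - k)%:R * x k <= wK w :=
  weighted_ratios_le_wK hsym hv.
have sq := sqr_add_le_weighted_sum x01.
set S := \sum_(k < N) x k in sq *.
have S_ge0 : 0 <= S by apply: sumr_ge0 => k _; case/andP: (x01 k (ltn_ord k)).
have two_wK : 2 * wK w = d * (N.+2%:R * N.+1%:R).
  have edges2 : ('C(N.+2, 2))%:R * 2 = N.+2%:R * N.+1%:R :> R.
    by rewrite -!natrM bin2_double.
  by rewrite hwK -edges2 mulrCA [2 * _]mulrC.
(* S^2 <= S^2 + S <= 2 w[K_n] = d n (n - 1) <= d n^2. *)
have S_bound : S <= Num.sqrt d * N.+2%:R.
  case/andP: hd => d_ge0 _; apply: le_sqrt_mul => //.
  apply: le_trans (_ : d * (N.+2%:R * N.+1%:R) <= _); first by lra.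
  by rewrite expr2 ler_wpM2l // ler_wpM2l ?ler0n // ler_nat.
lra.
Qed.
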